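(* Let $\Gamma$ be a finitely generated group with finite symmetric generating set $S$ acting by permutations on a countable set $X$, and $w:X\to(0,\infty)$ balanced. If there is no $w$-Følner sequence in $X$, then there exists a $w$-compression system.
   Context: $w$ is balanced: there is $C>1$ with $1/C<w(sx)/w(x)<C$ for all $x\in X$, $s\in S$. For finite $H\subseteq X$, $w(H)=\sum_{x\in H}w(x)$. A sequence $(F_n)$ of finite nonempty subsets of $X$ is a $w$-Følner sequence if for every $\epsilon>0$ and finite $L\subset\Gamma$ there is $n_{\epsilon,L}$ with $w(gF_n\cup F_n)/w(F_n)<1+\epsilon$ for all $n\ge n_{\epsilon,L}$, $g\in L$. A $w$-compression system is a finite set $T\subset\Gamma$ together with bounded nonnegative functions $\Psi_g:X\to\mathbb{R}$ ($g\in T$) such that for every $x\in X$: $\sum_{g\in T}\Psi_g(x)=1$ and $\sum_{g\in T}\Psi_g(g^{-1}x)\frac{w(g^{-1}x)}{w(x)}<\frac12$. *)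

From mathcomp Require Import all_boot.
From Stdlib Require Import Reals List.
Set Implicit Arguments.
Unset Strict Implicit.

Local Open Scope R_scope.

Definition is_group (G : Type) (mul : G -> G -> G) (inv : G -> G) (one : G) : Prop :=
  (forall a b c, mul a (mul b c) = mul (mul a b) c) /\
  (forall a, mul one a = a) /\ (forall a, mul a one = a) /\
  (forall a, mul (inv a) a = one) /\ (forall a, mul a (inv a) = one).

(* Left action of G on X (each act g is then a permutation of X). *)
Definition is_action (G X : Type) (mul : G -> G -> G) (one : G) (act : G -> X -> X) : Prop :=
  (forall x, act one x = x) /\ (forall g h x, act (mul g h) x = act g (act h x)).

Definition symmetric_generating (G : Type) (mul : G -> G -> G) (inv : G -> G) (one : G)
  (S : list G) : Prop :=
  (forall s, List.In s S -> List.In (inv s) S) /\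
  (forall g, exists l : list G,
     (forall s, List.In s l -> List.In s S) /\ g = List.fold_right mul one l).

Definition balanced (G : Type) (X : Type) (act : G -> X -> X) (S : list G) (w : X -> R) : Prop :=
  exists C, 1 < C /\ forall x s, List.In s S ->
    / C < w (act s x) / w x /\ w (act s x) / w x < C.

(* w(H) for a finite subset H of X, represented by a list (duplicates ignored). *)
Definition wsum (X : countType) (w : X -> R) (H : list X) : R :=
  List.fold_right Rplus 0 (List.map w (undup H)).

Definition translate_union (G : Type) (X : countType) (act : G -> X -> X) (g : G) (F : list X)
  : list X := undup (List.map (act g) F ++ F).

Definition w_Folner_sequence (G : Type) (X : countType) (act : G -> X -> X) (w : X -> R)
  (F : nat -> list X) : Prop :=
  (forall n, F n <> nil) /\
  forall eps : R, 0 < eps -> forall L : list G, exists N : nat, forall n : nat, (N <= n)%nat ->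
    forall g, List.In g L ->
      wsum w (translate_union act g (F n)) / wsum w (F n) < 1 + eps.

(* sum over a finite subset T of the group (T a duplicate-free list). *)
Definition gsum (G : Type) (T : list G) (f : G -> R) : R :=
  List.fold_right Rplus 0 (List.map f T).

Definition w_compression_system (G : Type) (X : Type) (inv : G -> G) (act : G -> X -> X)
  (w : X -> R) (T : list G) (Psi : G -> X -> R) : Prop :=
  List.NoDup T /\
  (forall g, List.In g T ->
     (forall x, 0 <= Psi g x) /\ exists B, forall x, Psi g x <= B) /\
  forall x : X,
    gsum T (fun g => Psi g x) = 1 /\
    gsum T (fun g => Psi g (act (inv g) x) * (w (act (inv g) x) / w x)) < / 2.

From Stdlib Require Import Reals List.
From mathcomp Require Import all_boot all_order all_algebra lra.
From mathcomp Require Import boolp reals Rstruct.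
From mathcomp Require classical_sets topology normedtype.

(* If no w-Følner sequence exists, some ball of the Cayley graph
      enlarges the weight of every nonempty finite F by a fixed factor 1 + e
      (otherwise the almost invariant sets would form a Følner sequence);
      iterating, a finite duplicate-free T satisfies w(T F) >= 3 w(F) for all F.
   2. Finite stage.  For a finite set s of points, the inequality of step 1 is
      Hall's condition for the transport problem sending the weight w(x) of each
      x in s through the ports g in T to the points g x, each point y having
      capacity w(y)/3.  A fractional Hall theorem, proved below by induction on
      the number of usable ports, gives a feasible flow, hence weights psi_g(x).
   3. Limit.  Taking s = the first n points and a pointwise cluster point of the
      resulting weights in [0,1]^(X x T) (Tychonoff), the normalization holds at
      every point and the compression bound 1/3 < 1/2 survives. *)

Set Implicit Arguments.
Unset Strict Implicit.
Unset Printing Implicit Defensive.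
Import Order.TTheory GRing.Theory Num.Theory.
Local Open Scope ring_scope.

Lemma eq_big_cond (R : nmodType) (I : Type) (r : seq I) (P1 P2 : pred I) (F1 F2 : I -> R) :
  (forall i, (if P1 i then F1 i else 0) = (if P2 i then F2 i else 0)) ->
  \sum_(i <- r | P1 i) F1 i = \sum_(i <- r | P2 i) F2 i.
Proof. by move=> h; rewrite big_mkcond [RHS]big_mkcond; apply: eq_bigr. Qed.

Lemma ler_sum_cond (R : numDomainType) (I : Type) (r : seq I) (P1 P2 : pred I)
    (F1 F2 : I -> R) :
  (forall i, (if P1 i then F1 i else 0) <= (if P2 i then F2 i else 0)) ->
  \sum_(i <- r | P1 i) F1 i <= \sum_(i <- r | P2 i) F2 i.
Proof. by move=> h; rewrite big_mkcond [leRHS]big_mkcond; apply: ler_sum. Qed.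

Lemma sum_indicator (R : nzSemiRingType) (I : eqType) (r : seq I) (P : pred I) (y0 : I) :
  uniq r -> \sum_(y <- r | P y) ((y == y0)%:R : R) = ((P y0) && (y0 \in r))%:R.
Proof.
move=> r_uniq; rewrite big_mkcond /=.
have [y0r|y0Nr] := boolP (y0 \in r).
  rewrite (bigD1_seq y0) //= eqxx andbT big1 ?addr0; first by case: (P y0).
  by move=> y /negbTE ->; case: (P y).
rewrite andbF big1_seq // => y /andP [_ yr]; case: eqP => [e|]; last by case: (P y).
by move: y0Nr; rewrite -e yr.
Qed.

Lemma restrict_sub (T : finType) (D : {set T}) (P : pred T) : {subset [set q in D | P q] <= D}.
Proof. by move=> q; rewrite inE => /andP []. Qed.

Lemma card_restrict_lt (T : finType) (D : {set T}) (P : pred T) p :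
  p \in D -> ~~ P p -> (#|[set q in D | P q]| < #|D|)%N.
Proof.
move=> pD NPp; apply/proper_card/properP; split; first exact/subsetP/restrict_sub.
by exists p; rewrite // inE (negbTE NPp) andbF.
Qed.

Lemma lower_ge0 (R : numDomainType) (T : eqType) (a : T -> R) x0 t :
  (forall x, 0 <= a x) -> t <= a x0 -> forall x, 0 <= a x - t * (x == x0)%:R.
Proof.
move=> a_ge0 t_le x; have [->|_] := eqVneq x x0; last by rewrite mulr0 subr0.
by rewrite mulr1 subr_ge0.
Qed.

Lemma foldr_min_le (R : realDomainType) (v : R) (l : seq R) :
  foldr Num.min v l <= v /\ forall z, z \in l -> foldr Num.min v l <= z.
Proof.
elim: l => [|z l [IHv IHl]] /=; first by split.
split; first by rewrite ge_min IHv orbT.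
move=> z'; rewrite inE => /orP [/eqP ->|hz]; first by rewrite ge_min lexx.
by rewrite ge_min IHl ?orbT.
Qed.

Lemma foldr_min_attained (R : realDomainType) (v : R) (l : seq R) :
  foldr Num.min v l = v \/ exists2 z, z \in l & foldr Num.min v l = z.
Proof.
elim: l => [|z l IH] /=; first by left.
rewrite /Num.min; case: ifP => _; first by right; exists z; rewrite ?mem_head.
case: IH => [->|[z' hz' ->]]; first by left.
by right; exists z'; rewrite // inE hz' orbT.
Qed.

(* Fractional Hall (supply-demand) theorem.  Each source x : A has m ports; port
   (x, i) leads to the target tgt x i. *)
Section FractionalHall.
Variables (R : realFieldType) (A : finType) (B : eqType) (m : nat) (tgt : A -> 'I_m -> B).

Definition targets : seq B := undup [seq tgt p.1 p.2 | p <- enum [set: A * 'I_m]].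

Definition adjacent (D : {set A * 'I_m}) (F : {set A}) (y : B) : bool :=
  [exists p in D, (p.1 \in F) && (tgt p.1 p.2 == y)].

Definition reach_cap (D : {set A * 'I_m}) (c : B -> R) (F : {set A}) : R :=
  \sum_(y <- targets | adjacent D F y) c y.

Definition slack (D : {set A * 'I_m}) (a : A -> R) (c : B -> R) (F : {set A}) : R :=
  reach_cap D c F - \sum_(x in F) a x.

Definition hall_condition (D : {set A * 'I_m}) (a : A -> R) (c : B -> R) : Prop :=
  forall F : {set A}, \sum_(x in F) a x <= reach_cap D c F.

Definition inflow (f : A -> 'I_m -> R) (y : B) : R := \sum_x \sum_(i | tgt x i == y) f x i.

Definition feasible (D : {set A * 'I_m}) (a : A -> R) (c : B -> R) (f : A -> 'I_m -> R) :=
  [/\ forall x i, 0 <= f x i, forall x i, (x, i) \notin D -> f x i = 0,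
      forall x, \sum_i f x i = a x & forall y, inflow f y <= c y].

Lemma targets_uniq : uniq targets. Proof. exact: undup_uniq. Qed.

Lemma mem_targets x i : tgt x i \in targets.
Proof. by rewrite mem_undup; apply/mapP; exists (x, i); rewrite ?mem_enum ?inE. Qed.

Lemma adjacent_port (D : {set A * 'I_m}) (F : {set A}) x i :
  (x, i) \in D -> x \in F -> adjacent D F (tgt x i).
Proof. by move=> xiD xF; apply/existsP; exists (x, i); rewrite xiD xF eqxx. Qed.

Lemma adjacent_sub (D : {set A * 'I_m}) (F F' : {set A}) y :
  F \subset F' -> adjacent D F y -> adjacent D F' y.
Proof.
move=> /subsetP sFF' /existsP [p /and3P [pD pF py]].
by apply/existsP; exists p; rewrite pD sFF'.
Qed.

Lemma inflowD f g y : inflow (fun x i => f x i + g x i) y = inflow f y + inflow g y.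
Proof. by rewrite /inflow -big_split; apply: eq_bigr => x _; rewrite big_split. Qed.

Lemma inflow_ge0 f y : (forall x i, 0 <= f x i) -> 0 <= inflow f y.
Proof. by move=> f_ge0; apply: sumr_ge0 => x _; apply: sumr_ge0. Qed.

Definition port_flow (x0 : A) (i0 : 'I_m) (t : R) (x : A) (i : 'I_m) : R :=
  if (x == x0) && (i == i0) then t else 0.

Lemma inflow_port_flow x0 i0 t y :
  inflow (port_flow x0 i0 t) y = t * (y == tgt x0 i0)%:R.
Proof.
rewrite /inflow (bigD1 x0) //= [X in _ + X]big1 ?addr0; last first.
  by move=> x /negbTE xx0; rewrite big1 // => i _; rewrite /port_flow xx0.
rewrite big_mkcond (bigD1 i0) //= [X in _ + X]big1 ?addr0.
  by rewrite /port_flow !eqxx eq_sym; case: eqP; rewrite ?mulr1 ?mulr0.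
by move=> i /negbTE ii0; rewrite /port_flow ii0 andbF; case: ifP.
Qed.

Lemma feasible_add_port (D D' : {set A * 'I_m}) (a : A -> R) (c : B -> R) f x0 i0 t :
  {subset D' <= D} -> (x0, i0) \in D -> 0 <= t ->
  feasible D' (fun x => a x - t * (x == x0)%:R) (fun y => c y - t * (y == tgt x0 i0)%:R) f ->
  feasible D a c (fun x i => f x i + port_flow x0 i0 t x i).
Proof.
move=> sD'D x0i0D t_ge0 [f_ge0 f_supp f_out f_in]; split.
- by move=> x i; rewrite /port_flow; case: ifP => _; rewrite addr_ge0.
- move=> x i xiND; rewrite f_supp; last by apply: contra xiND; apply: sD'D.
  rewrite /port_flow; case: ifP => [/andP [/eqP ex /eqP ei]|_]; last by rewrite addr0.
  by move: xiND; rewrite ex ei x0i0D.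
- move=> x; rewrite big_split /= f_out /port_flow.
  have [->|xx0] := eqVneq x x0; last by rewrite mulr0 subr0 big1 ?addr0.
  rewrite mulr1 (bigD1 i0) //= eqxx big1 ?addr0 ?subrK //.
  by move=> i /negbTE ->.
- by move=> y; rewrite inflowD inflow_port_flow; have := f_in y; lra.
Qed.

Lemma sum_lower_supply (a : A -> R) x0 t (F : {set A}) :
  \sum_(x in F) (a x - t * (x == x0)%:R) = \sum_(x in F) a x - t * (x0 \in F)%:R.
Proof.
by rewrite sumrB -mulr_sumr sum_indicator ?index_enum_uniq ?mem_index_enum ?andbT.
Qed.

Lemma reach_cap_lower D (c : B -> R) x0 i0 t F :
  reach_cap D (fun y => c y - t * (y == tgt x0 i0)%:R) F
  = reach_cap D c F - t * (adjacent D F (tgt x0 i0))%:R.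
Proof.
by rewrite /reach_cap sumrB -mulr_sumr sum_indicator ?targets_uniq // mem_targets andbT.
Qed.

Lemma hall_shift (D : {set A * 'I_m}) (a : A -> R) (c : B -> R) x0 i0 t :
  (x0, i0) \in D -> hall_condition D a c ->
  (forall F : {set A}, x0 \notin F -> adjacent D F (tgt x0 i0) -> t <= slack D a c F) ->
  hall_condition D (fun x => a x - t * (x == x0)%:R) (fun y => c y - t * (y == tgt x0 i0)%:R).
Proof.
move=> x0i0D hall small_t F; rewrite sum_lower_supply reach_cap_lower.
have := hall F; have [x0F|x0NF] := boolP (x0 \in F).
  by rewrite (adjacent_port x0i0D x0F) => h; rewrite lerB.
have [adj|nadj] /= := boolP (adjacent D F _); last by rewrite !mulr0 !subr0.
by have := small_t F x0NF adj; rewrite /slack; lra.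
Qed.

Lemma hall_drop_source (D : {set A * 'I_m}) (a : A -> R) (c : B -> R) x0 :
  a x0 = 0 -> hall_condition D a c -> hall_condition [set p in D | p.1 != x0] a c.
Proof.
move=> ax0 hall F; have -> : \sum_(x in F) a x = \sum_(x in F :\ x0) a x.
  apply: eq_big_cond => x; rewrite in_setD1.
  by case: eqP => [->|//]; rewrite ax0; case: ifP.
apply: (le_trans (hall _)); rewrite le_eqVlt /reach_cap; apply/orP; left; apply/eqP.
apply: eq_bigl => y; apply: eq_existsb => p; rewrite !inE.
by case: (p \in D); case: (p.1 == x0); case: (p.1 \in F).
Qed.

Lemma hall_drop_target (D : {set A * 'I_m}) (a : A -> R) (c : B -> R) y0 :
  c y0 = 0 -> hall_condition D a c ->
  hall_condition [set p in D | tgt p.1 p.2 != y0] a c.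
Proof.
move=> cy0 hall F; apply: (le_trans (hall F)); rewrite le_eqVlt; apply/orP; left.
apply/eqP; apply: eq_big_cond => y; have [->|yy0] := eqVneq y y0.
  by rewrite cy0; do 2!case: ifP.
congr (if _ then _ else _); apply: eq_existsb => p; rewrite !inE.
by case: (eqVneq (tgt p.1 p.2) y) => [->|]; rewrite ?yy0 ?andbT ?andbF.
Qed.

(* Splitting along a tight set F1: the sources in F1 only use targets reachable
   from F1, the others only the remaining targets. *)
Definition inner_ports (D : {set A * 'I_m}) (F1 : {set A}) : {set A * 'I_m} :=
  [set p in D | p.1 \in F1].

Definition outer_ports (D : {set A * 'I_m}) (F1 : {set A}) : {set A * 'I_m} :=
  [set p in D | (p.1 \notin F1) && ~~ adjacent D F1 (tgt p.1 p.2)].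

Lemma hall_inner (D : {set A * 'I_m}) (a : A -> R) (c : B -> R) F1 :
  hall_condition D a c ->
  hall_condition (inner_ports D F1) (fun x => if x \in F1 then a x else 0) c.
Proof.
move=> hall F; have -> : \sum_(x in F) (if x \in F1 then a x else 0)
                       = \sum_(x in F :&: F1) a x.
  by apply: eq_big_cond => x; rewrite in_setI; case: (x \in F); case: (x \in F1).
apply: (le_trans (hall _)); rewrite le_eqVlt /reach_cap; apply/orP; left; apply/eqP.
apply: eq_bigl => y; apply: eq_existsb => p; rewrite !inE.
by case: (p \in D); case: (p.1 \in F); case: (p.1 \in F1).
Qed.

(* Hall's condition for the sources outside a tight F1, using only the targets
   that F1 does not reach: since F1 has no slack, the targets reached by H but
   not by F1 already carry the supply of H. *)
Lemma hall_outer (D : {set A * 'I_m}) (a : A -> R) (c : B -> R) F1 :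
  (forall y, 0 <= c y) -> hall_condition D a c -> slack D a c F1 = 0 ->
  hall_condition (outer_ports D F1) (fun x => if x \in F1 then 0 else a x)
                 (fun y => if adjacent D F1 y then 0 else c y).
Proof.
move=> c_ge0 hall tight F; set H := F :\: F1.
have -> : \sum_(x in F) (if x \in F1 then 0 else a x) = \sum_(x in H) a x.
  by apply: eq_big_cond => x; rewrite in_setD; case: (x \in F); case: (x \in F1).
have sumHF1 : \sum_(x in H :|: F1) a x = \sum_(x in H) a x + \sum_(x in F1) a x.
  rewrite big_mkcond [X in X + _]big_mkcond [X in _ + X]big_mkcond -big_split.
  apply: eq_bigr => x _; rewrite in_setU in_setD.
  by case: (x \in F1); case: (x \in F); rewrite /= ?addr0 ?add0r.
have newly : reach_cap D c (H :|: F1) - reach_cap D c F1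
    = \sum_(y <- targets | adjacent D (H :|: F1) y && ~~ adjacent D F1 y) c y.
  apply/eqP; rewrite subr_eq; apply/eqP; rewrite /reach_cap.
  rewrite big_mkcond [X in _ = X + _]big_mkcond [X in _ = _ + X]big_mkcond -big_split.
  apply: eq_bigr => y _ /=.
  have [adj|_] := boolP (adjacent D F1 y); last by rewrite andbT addr0.
  by rewrite (adjacent_sub (subsetUr H F1) adj) add0r.
have newly_outer : \sum_(y <- targets | adjacent D (H :|: F1) y && ~~ adjacent D F1 y) c y
    <= reach_cap (outer_ports D F1) (fun y => if adjacent D F1 y then 0 else c y) F.
  apply: ler_sum_cond => y.
  have [/andP [adjHF1 nadj]|_] := boolP (adjacent D (H :|: F1) y && ~~ adjacent D F1 y);
    last by case: ifP => // _; case: ifP => // _; apply: c_ge0.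
  have -> : adjacent (outer_ports D F1) F y.
    move: adjHF1 => /existsP [p /and3P [pD pHF1 /eqP py]]; apply/existsP; exists p.
    have pNF1 : p.1 \notin F1.
      by apply: contra nadj => pF1; rewrite -py adjacent_port // -surjective_pairing.
    move: pHF1; rewrite in_setU (negbTE pNF1) orbF in_setD => /andP [_ pF].
    by rewrite !inE pD pNF1 pF py nadj eqxx.
  by rewrite (negbTE nadj).
move: (hall (H :|: F1)) newly newly_outer tight; rewrite sumHF1 /slack; lra.
Qed.

Lemma feasible_glue (D : {set A * 'I_m}) (a : A -> R) (c : B -> R) F1 f1 f2 :
  feasible (inner_ports D F1) (fun x => if x \in F1 then a x else 0) c f1 ->
  feasible (outer_ports D F1) (fun x => if x \in F1 then 0 else a x)
           (fun y => if adjacent D F1 y then 0 else c y) f2 ->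
  feasible D a c (fun x i => f1 x i + f2 x i).
Proof.
move=> [f1_ge0 f1_supp f1_out f1_in] [f2_ge0 f2_supp f2_out f2_in]; split.
- by move=> x i; rewrite addr_ge0.
- by move=> x i xiND; rewrite f1_supp ?f2_supp ?addr0 // !inE negb_and xiND.
- by move=> x; rewrite big_split /= f1_out f2_out; case: ifP; rewrite ?addr0 ?add0r.
- move=> y; rewrite inflowD; have := f2_in y; have := f1_in y.
  have [adj|nadj] := boolP (adjacent D F1 y).
    by have := inflow_ge0 y f2_ge0; lra.
  have -> : inflow f1 y = 0.
    rewrite /inflow big1 // => x _; rewrite big1 // => i /eqP xiy; apply: f1_supp.
    rewrite inE; apply: contra nadj => /andP [xiD xF1].
    by rewrite -xiy adjacent_port.
  by rewrite add0r.
Qed.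

Lemma feasible_sub (D D' : {set A * 'I_m}) (a : A -> R) (c : B -> R) f :
  {subset D' <= D} -> feasible D' a c f -> feasible D a c f.
Proof.
move=> sD'D [f_ge0 f_supp f_out f_in]; split=> // x i xiND.
by apply: f_supp; apply: contra xiND; apply: sD'D.
Qed.

(* A source with positive supply has a usable port, by Hall's condition on {x0}. *)
Lemma hall_port (D : {set A * 'I_m}) (a : A -> R) (c : B -> R) x0 :
  0 < a x0 -> hall_condition D a c -> exists i0, (x0, i0) \in D.
Proof.
move=> ax0_gt0 hall; apply/existsP; apply: contraLR (hall [set x0]).
rewrite negb_exists => /forallP noport; rewrite -ltNge big_set1 /reach_cap big_pred0 //.
move=> y; apply/existsP => -[[x i] /and3P [xiD]]; rewrite inE => /eqP ex _.
by move: (noport i); rewrite -ex xiD.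
Qed.

Lemma maximal_shift (D : {set A * 'I_m}) (a : A -> R) (c : B -> R) x0 i0 :
  0 <= a x0 -> (forall y, 0 <= c y) -> hall_condition D a c ->
  let y0 := tgt x0 i0 in exists t,
  [/\ 0 <= t, t <= a x0, t <= c y0,
      forall F : {set A}, x0 \notin F -> adjacent D F y0 -> t <= slack D a c F &
      [\/ t = a x0, t = c y0 |
          exists2 F : {set A}, (x0 \notin F) && adjacent D F y0 & t = slack D a c F]].
Proof.
move=> ax0_ge0 c_ge0 hall y0.
pose slacks := [seq slack D a c F | F : {set A} <- enum {set A} & (x0 \notin F) && adjacent D F y0].
pose t := foldr Num.min (Num.min (a x0) (c y0)) slacks.
have [t_le_min t_le_slacks] := foldr_min_le (Num.min (a x0) (c y0)) slacks.
have t_attained : [\/ t = a x0, t = c y0 |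
    exists2 F : {set A}, (x0 \notin F) && adjacent D F y0 & t = slack D a c F].
  case: (foldr_min_attained (Num.min (a x0) (c y0)) slacks) => [t_eq|[z /mapP [F F_in ->] t_eq]].
    have [ac|ca] := leP (a x0) (c y0).
      by apply: Or31; rewrite /t t_eq min_l.
    by apply: Or32; rewrite /t t_eq min_r // ltW.
  by move: F_in; rewrite mem_filter => /andP [F_ok _]; apply: Or33; exists F.
exists t; split => //.
- by case: t_attained => [->|->|[F _ ->]] //; rewrite subr_ge0.
- by move: t_le_min; rewrite le_min => /andP [].
- by move: t_le_min; rewrite le_min => /andP [].
- by move=> F x0NF adj; apply: t_le_slacks; apply: map_f; rewrite mem_filter x0NF adj mem_enum.
Qed.

(* The induction step: after moving the maximal amount along a port (x0, i0) of
   a source with positive supply, x0 is exhausted, tgt x0 i0 is saturated, or some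
   set F1 is tight; each case leaves problems on fewer ports. *)
Lemma hall_step (D : {set A * 'I_m}) :
  (forall (D' : {set A * 'I_m}) (a : A -> R) (c : B -> R), (#|D'| < #|D|)%N ->
     (forall x, 0 <= a x) -> (forall y, 0 <= c y) -> hall_condition D' a c ->
     exists f, feasible D' a c f) ->
  forall (a : A -> R) (c : B -> R), (forall x, 0 <= a x) -> (forall y, 0 <= c y) ->
  hall_condition D a c -> exists f, feasible D a c f.
Proof.
move=> IH a c a_ge0 c_ge0 hall.
have [a0|] := boolP [forall x, a x == 0].
  exists (fun _ _ => 0); split => //.
  - by move=> x; rewrite big1 // (eqP (forallP a0 x)).
  - by move=> y; rewrite /inflow big1 // => x _; rewrite big1.
rewrite negb_forall => /existsP [x0 ax0_neq0].
have ax0_gt0 : 0 < a x0 by rewrite lt_def ax0_neq0 a_ge0.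
have [i0 x0i0D] := hall_port ax0_gt0 hall; set y0 := tgt x0 i0.
have [t [t_ge0 t_le_a t_le_c t_le_slack t_attained]] := maximal_shift i0 (a_ge0 x0) c_ge0 hall.
pose a' x := a x - t * (x == x0)%:R; pose c' y := c y - t * (y == y0)%:R.
have a'_ge0 : forall x, 0 <= a' x := lower_ge0 a_ge0 t_le_a.
have c'_ge0 : forall y, 0 <= c' y := lower_ge0 c_ge0 t_le_c.
have hall' : hall_condition D a' c' := hall_shift x0i0D hall t_le_slack.
suff [f' f'_ok] : exists f', feasible D a' c' f'.
  by exists (fun x i => f' x i + port_flow x0 i0 t x i); apply: feasible_add_port f'_ok.
have smaller := card_restrict_lt x0i0D.
case: t_attained => [t_eq|t_eq|[F1 /andP [x0NF1 adj1] t_eq]].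
- have a'x0 : a' x0 = 0 by rewrite /a' eqxx mulr1 t_eq subrr.
  have [|f' ok] := IH _ a' c' (smaller _ _) a'_ge0 c'_ge0 (hall_drop_source a'x0 hall').
    by rewrite /= eqxx.
  by exists f'; apply: feasible_sub ok; apply: restrict_sub.
- have c'y0 : c' y0 = 0 by rewrite /c' eqxx mulr1 t_eq subrr.
  have [|f' ok] := IH _ a' c' (smaller _ _) a'_ge0 c'_ge0 (hall_drop_target c'y0 hall').
    by rewrite /= eqxx.
  by exists f'; apply: feasible_sub ok; apply: restrict_sub.
have tight : slack D a' c' F1 = 0.
  rewrite /slack sum_lower_supply reach_cap_lower (negbTE x0NF1) adj1 mulr1 mulr0.
  by rewrite t_eq /slack; lra.
have in_ge0 x : 0 <= (if x \in F1 then a' x else 0) by case: ifP.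
have out_ge0 x : 0 <= (if x \in F1 then 0 else a' x) by case: ifP.
have out_cap_ge0 y : 0 <= (if adjacent D F1 y then 0 else c' y) by case: ifP.
have [f1 ok1] := IH _ _ c' (smaller _ x0NF1) in_ge0 c'_ge0 (hall_inner F1 hall').
have [|f2 ok2] := IH _ _ _ (smaller _ _) out_ge0 out_cap_ge0 (hall_outer c'_ge0 hall' tight).
  by rewrite /= adj1 andbF.
by exists (fun x i => f1 x i + f2 x i); apply: feasible_glue ok1 ok2.
Qed.

Theorem fractional_hall (D : {set A * 'I_m}) (a : A -> R) (c : B -> R) :
  (forall x, 0 <= a x) -> (forall y, 0 <= c y) -> hall_condition D a c ->
  exists f, feasible D a c f.
Proof.
elim: #|D| {-2}D (leqnn #|D|) a c => [|n IH] {}D D_small; apply: hall_step => D' a c lt_D'.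
  by move: (leq_trans lt_D' D_small).
by apply: IH; rewrite -ltnS (leq_trans lt_D').
Qed.

End FractionalHall.

(* Tychonoff compactness of [0, 1]^I: any sequence of functions I -> [0, 1] has
   a pointwise cluster point p, i.e. for every finite set of indices, every
   tolerance and every N, some later term is close to p on those indices. *)
Section Compactness.
Import mathcomp_extra classical_sets topology normedtype numFieldNormedType.Exports ArrowAsProduct.
Local Open Scope classical_set_scope.

Lemma pointwise_cluster_point (R : realType) (I : eqType) (psi : nat -> I -> R) :
  (forall n i, 0 <= psi n i <= 1) ->
  exists p : I -> R, (forall i, 0 <= p i <= 1) /\
    forall (cs : seq I) (e : R), 0 < e -> forall N, exists n, (N <= n)%N /\
      forall c, c \in cs -> `|psi n c - p c| < e.
Proof.
move=> psi01.
pose cube := [set f : I -> R | forall i, `[0, 1]%classic (f i)].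
have cube_compact : compact cube :=
  @tychonoff I (fun=> R) (fun=> `[0, 1]%classic) (fun=> @segment_compact R 0 1).
have psi_cube : (psi @ \oo) cube.
  by exists 0%N => // n _ i /=; rewrite in_itv /=; apply: psi01.
have [p [p_cube p_cluster]] := cube_compact _ (fmap_proper_filter psi eventually_filter) psi_cube.
exists p; split; first by move=> i; have := p_cube i; rewrite /= in_itv.
move=> cs e e_gt0 N.
have near_p : nbhs p [set f : I -> R | forall c, c \in cs -> `|f c - p c| < e].
  elim: cs => [|c cs IH]; first by apply: filterS filterT => f _ c; rewrite in_nil.
  have near_c : nbhs p [set f : I -> R | `|f c - p c| < e].
    have := @proj_continuous I (fun=> R) c p _ (nbhsx_ballx (p c) e e_gt0).
    suff -> : [set f : I -> R | `|f c - p c| < e] = proj c @^-1` (ball (p c) e) by [].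
    by apply/seteqP; split => f /=; rewrite /proj -ball_normE /= distrC.
  apply: filterS (filterI near_c IH) => f [fc fcs] c'.
  by rewrite inE => /orP [/eqP ->|]; last exact: fcs.
have tail : (psi @ \oo) (psi @` [set n | (N <= n)%N]) by exists N => // n Nn; exists n.
by have [f [[n Nn <-] close]] := p_cluster _ _ tail near_p; exists n.
Qed.

End Compactness.

Section Weights.
Variables (X : countType) (w : X -> R).
Hypothesis w_gt0 : forall x, 0 < w x.

Lemma In_mem (T : eqType) (x : T) (l : list T) : List.In x l <-> x \in l.
Proof.
elim: l => [|y l IH] //=; rewrite inE; split.
  by case=> [->|/IH ->]; rewrite ?eqxx ?orbT.
by case/orP => [/eqP ->|/IH]; [left|right].
Qed.

Lemma wsumE (s : seq X) : wsum w s = \sum_(x <- undup s) w x.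
Proof. by rewrite /wsum; elim: (undup s) => [|x l IH] /=; rewrite ?big_nil ?big_cons ?IH. Qed.

Lemma wsum_eq_mem (s t : seq X) : s =i t -> wsum w s = wsum w t.
Proof.
move=> st; rewrite !wsumE; apply: perm_big; apply: uniq_perm; rewrite ?undup_uniq //.
by move=> x; rewrite !mem_undup.
Qed.

Lemma wsum_ge0 (s : seq X) : 0 <= wsum w s.
Proof. by rewrite wsumE; apply: sumr_ge0 => x _; exact: ltW. Qed.

Lemma wsum_subset (s t : seq X) : {subset s <= t} -> wsum w s <= wsum w t.
Proof.
move=> st; rewrite !wsumE.
have -> : \sum_(x <- undup s) w x = \sum_(x <- undup t | x \in s) w x.
  rewrite -[RHS]big_filter; apply: perm_big; apply: uniq_perm.
  - exact: undup_uniq.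
  - by apply: filter_uniq; exact: undup_uniq.
  by move=> x; rewrite mem_filter !mem_undup; case: (boolP (x \in s)) => // /st ->.
rewrite [leLHS]big_mkcond /=; apply: ler_sum => x _; case: ifP => _ //.
exact: ltW.
Qed.

Lemma wsum_gt0 (s : seq X) : s <> [::] -> 0 < wsum w s.
Proof.
case: s => [//|x s] _; rewrite wsumE (bigD1_seq x) ?undup_uniq ?mem_undup ?mem_head //=.
by apply: ltr_wpDr; [apply: sumr_ge0 => y _; exact: ltW | exact: w_gt0].
Qed.

End Weights.

Definition translates (G : Type) (X : Type) (act : G -> X -> X) (T : list G) (F : seq X)
  : seq X := List.flat_map (fun g => List.map (act g) F) T.

Lemma mem_translates (G : Type) (X : eqType) (act : G -> X -> X) (T : list G) (F : seq X) x :
  x \in translates act T F <-> exists g, List.In g T /\ exists2 y, y \in F & x = act g y.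
Proof.
rewrite -In_mem List.in_flat_map; split.
  by move=> [g [gT /List.in_map_iff [y [<- /In_mem yF]]]]; exists g; split => //; exists y.
by move=> [g [gT [y /In_mem yF ->]]]; exists g; split => //; apply: List.in_map.
Qed.

Lemma bernoulli_ineq (R' : realDomainType) (e : R') k : 0 <= e -> 1 + k%:R * e <= (1 + e) ^+ k.
Proof.
move=> e_ge0; elim: k => [|k IH]; first by rewrite mul0r addr0 expr0.
rewrite exprS -natr1.
have : (1 + e) * (1 + k%:R * e) <= (1 + e) * (1 + e) ^+ k by rewrite ler_wpM2l ?addr_ge0.
have : 0 <= k%:R * e * e by rewrite !mulr_ge0 // ler0n.
lra.
Qed.

Section Growth.
Variables (G : Type) (mul : G -> G -> G) (inv : G -> G) (one : G)
  (X : countType) (act : G -> X -> X) (S : list G) (w : X -> R).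
Hypotheses (act_ok : is_action mul one act) (S_gen : symmetric_generating mul inv one S)
  (w_gt0 : forall x, 0 < w x).

Fixpoint ball (n : nat) : list G :=
  if n is n'.+1 then ball n' ++ List.flat_map (fun s => List.map (mul s) (ball n')) S
  else [:: one].

Lemma ball_mono n n' g : (n <= n')%N -> List.In g (ball n) -> List.In g (ball n').
Proof.
elim: n' => [|n' IH] le_nn' gn; first by move: le_nn'; rewrite leqn0 => /eqP <-.
case: (eqVneq n n'.+1) => [<- //|neq]; rewrite /=; apply/List.in_app_iff; left.
by apply: IH; rewrite // -ltnS ltn_neqAle neq.
Qed.

Lemma one_in_ball n : List.In one (ball n).
Proof. by apply: (@ball_mono 0); [|left]. Qed.

Lemma ball_covers (L : list G) : exists n, forall g, List.In g L -> List.In g (ball n).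
Proof.
have covers g : exists n, List.In g (ball n).
  have [l [lS ->]] := S_gen.2 g; exists (size l).
  elim: l lS => [|s l IH] lS /=; first by left.
  apply/List.in_app_iff; right; apply/List.in_flat_map; exists s; split; first by apply: lS; left.
  by apply: List.in_map; apply: IH => s' s'l; apply: lS; right.
elim: L => [|g L [n IH]]; first by exists 0%N.
have [n' gn'] := covers g.
exists (maxn n n') => g' [<-|g'L]; first by apply: ball_mono gn'; rewrite leq_maxr.
by apply: ball_mono (IH _ g'L); rewrite leq_maxl.
Qed.

Definition expansion_rate (n : nat) : R := n.+1%:R^-1.

Lemma folner_of_almost_invariant (F : nat -> seq X) :
  (forall n, F n <> [::]) ->
  (forall n g, List.In g (ball n) ->
     wsum w (translate_union act g (F n)) < (1 + expansion_rate n) * wsum w (F n)) ->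
  w_Folner_sequence act w F.
Proof.
move=> F_neq0 almost_inv; split=> // eps /RltP eps_gt0 L.
have [M LM] := ball_covers L.
pose N0 := Num.bound eps^-1.
have N0_big : eps^-1 < N0%:R by apply: archi_boundP; rewrite invr_ge0 ltW.
exists (maxn M N0) => n le_n g gL.
have gn : List.In g (ball n).
  by apply: ball_mono (LM _ gL); apply: leq_trans le_n; rewrite leq_maxl.
have N0n : (N0 <= n)%N by apply: leq_trans le_n; rewrite leq_maxr.
apply/RltP; rewrite RdivE RplusE ltr_pdivrMr ?wsum_gt0 //.
apply: (lt_le_trans (almost_inv n g gn)); rewrite ler_pM2r ?wsum_gt0 // lerD2l.
rewrite /expansion_rate -[leRHS]invrK lef_pV2 ?posrE ?invr_gt0 ?ltr0n //.
by apply/ltW/(lt_le_trans N0_big); rewrite ler_nat leqW.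
Qed.

Lemma uniform_expansion : ~ (exists F, w_Folner_sequence act w F) ->
  exists n, forall F : seq X, F <> [::] -> exists g, List.In g (ball n) /\
    (1 + expansion_rate n) * wsum w F <= wsum w (translate_union act g F).
Proof.
move=> no_folner; apply: contrapT => no_n; apply: no_folner.
have almost_inv n : exists F : seq X, F <> [::] /\ forall g, List.In g (ball n) ->
    wsum w (translate_union act g F) < (1 + expansion_rate n) * wsum w F.
  apply: contrapT => no_F; apply: no_n; exists n => F F_neq0.
  apply: contrapT => no_g; apply: no_F; exists F; split => // g gn.
  by rewrite ltNge; apply/negP => le; apply: no_g; exists g.
have [F F_ok] := choice almost_inv.
by exists F; apply: folner_of_almost_invariant => n; case: (F_ok n).
Qed.

Lemma ball_expands n : (forall F : seq X, F <> [::] -> exists g, List.In g (ball n) /\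
    (1 + expansion_rate n) * wsum w F <= wsum w (translate_union act g F)) ->
  forall F : seq X, F <> [::] ->
    (1 + expansion_rate n) * wsum w F <= wsum w (translates act (ball n) F).
Proof.
move=> expand F F_neq0; have [g [gn le]] := expand F F_neq0.
apply: (le_trans le); apply: wsum_subset => // x; rewrite mem_undup mem_cat.
case/orP => [/mapP [y /In_mem yF ->]|xF]; apply/mem_translates.
  by exists g; split => //; exists y; rewrite // -In_mem.
by exists one; split; [apply: one_in_ball | exists x; rewrite ?(proj1 act_ok)].
Qed.

Fixpoint powers (L : list G) (k : nat) : list G :=
  if k is k'.+1 then List.flat_map (fun g => List.map (mul g) (powers L k')) L
  else [:: one].

Lemma translates_powers0 L F : translates act (powers L 0) F =i F.
Proof.
move=> x; apply/idP/idP => [/mem_translates [g [[<-|[]] [y yF ->]]]|xF].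
  by rewrite (proj1 act_ok).
by apply/mem_translates; exists one; split; [left | exists x; rewrite ?(proj1 act_ok)].
Qed.

Lemma translates_powersS L k F :
  translates act (powers L k.+1) F =i translates act L (translates act (powers L k) F).
Proof.
move=> x; apply/idP/idP => /mem_translates [g [gL [y yF ->]]]; apply/mem_translates.
  move: gL => /List.in_flat_map [g1 [g1L /List.in_map_iff [h [<- hk]]]].
  exists g1; split => //; exists (act h y); last by rewrite (proj2 act_ok).
  by apply/mem_translates; exists h; split => //; exists y.
move: yF => /mem_translates [h [hk [z zF ->]]].
exists (mul g h); split; first by apply/List.in_flat_map; exists g; split; last exact: List.in_map.
by exists z; rewrite ?(proj2 act_ok).
Qed.

Lemma powers_expand (L : list G) (e : R) :
  (forall F : seq X, F <> [::] -> (1 + e) * wsum w F <= wsum w (translates act L F)) ->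
  0 <= e -> forall k (F : seq X),
  F <> [::] -> (1 + e) ^+ k * wsum w F <= wsum w (translates act (powers L k) F).
Proof.
move=> expand e_ge0; elim=> [|k IH] F F_neq0.
  by rewrite expr0 mul1r (wsum_eq_mem _ (translates_powers0 L F)).
have powF_neq0 : translates act (powers L k) F <> [::].
  move=> pow0; have := IH F F_neq0; rewrite pow0; have := wsum_gt0 w_gt0 F_neq0.
  have : 0 < (1 + e) ^+ k by rewrite exprn_gt0 // ltr_wpDr.
  have : wsum w [::] = 0 by [].
  nra.
rewrite (wsum_eq_mem _ (translates_powersS L k F)).
apply: le_trans (expand _ powF_neq0); rewrite exprS -mulrA ler_wpM2l ?addr_ge0 //.
exact: IH.
Qed.

Lemma tripling_set : ~ (exists F, w_Folner_sequence act w F) ->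
  exists T : list G, List.NoDup T /\ forall F : seq X, 3 * wsum w F <= wsum w (translates act T F).
Proof.
move=> no_folner; have [n expand] := uniform_expansion no_folner.
have rate_ge0 : 0 <= expansion_rate n by rewrite invr_ge0 ler0n.
pose k := (2 * n.+1)%N; pose T := List.nodup (fun a b => pselect (a = b)) (powers (ball n) k).
exists T; split; first exact: List.NoDup_nodup.
move=> F; have [->|F_neq0] := eqVneq F [::]; first by rewrite mulr0 wsum_ge0.
have same g : List.In g T <-> List.In g (powers (ball n) k) := List.nodup_In _ _ _.
have -> : wsum w (translates act T F) = wsum w (translates act (powers (ball n) k) F).
  apply: wsum_eq_mem => x; apply/idP/idP => /mem_translates [g [gT yF]];
    by apply/mem_translates; exists g; split => //; apply/same.
apply: le_trans (powers_expand (ball_expands expand) rate_ge0 k (elimN eqP F_neq0)).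
rewrite ler_wpM2r ?wsum_ge0 //; apply: le_trans (bernoulli_ineq k rate_ge0).
rewrite /k /expansion_rate natrM -mulrA mulfV ?pnatr_eq0 // mulr1; lra.
Qed.

End Growth.

Lemma In_nth_ord (G : Type) (one : G) (T : list G) (g : G) :
  List.In g T <-> exists i : 'I_(size T), nth one T i = g.
Proof.
elim: T => [|h l IH] /=; first by split => // -[[]].
split.
  case=> [<-|/IH [[i lt_i] nth_g]]; first by exists ord0.
  by exists (Ordinal (lt_i : (i.+1 < (size l).+1)%N)).
move=> [[[|i] lt_i] /= nth_g]; first by left.
by right; apply/IH; exists (Ordinal (lt_i : (i < size l)%N)).
Qed.

Section FiniteStage.
Variables (G : Type) (one : G) (inv : G -> G) (X : countType) (act : G -> X -> X)
  (w : X -> R) (T : list G).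
Hypotheses (act_inv : forall g x, act g (act (inv g) x) = x) (w_gt0 : forall x, 0 < w x)
  (T_triples : forall F : seq X, 3 * wsum w F <= wsum w (translates act T F)).
Variable s : seq X.

(* the sources of the transport problem: the points of s *)
Definition point := seq_sub s.
Definition port_target (a : point) (i : 'I_(size T)) : X := act (nth one T i) (val a).

Lemma hall_for_translates :
  hall_condition port_target [set: point * 'I_(size T)] (fun a => w (val a)) (fun y => w y / 3).
Proof.
move=> F; pose Fl := [seq val a | a <- enum F].
have supply : \sum_(a in F) w (val a) = wsum w Fl.
  rewrite wsumE undup_id ?map_inj_uniq ?enum_uniq //; last exact: val_inj.
  by rewrite big_map big_enum.
have capacity : reach_cap port_target [set: point * 'I_(size T)] (fun y => w y / 3) F
    = wsum w (translates act T Fl) / 3.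
  rewrite /reach_cap -mulr_suml wsumE -big_filter; congr (_ * _).
  apply: perm_big; apply: uniq_perm; rewrite ?filter_uniq ?targets_uniq ?undup_uniq //.
  move=> y; rewrite mem_filter mem_undup; apply/andP/idP.
    move=> [/existsP [[a i] /andP [_ /andP [/= aF /eqP <-]]] _]; apply/mem_translates.
    exists (nth one T i); split; first by apply/(In_nth_ord one); exists i.
    by exists (val a); rewrite ?map_f ?mem_enum.
  move=> /mem_translates [g [/(In_nth_ord one) [i <-] [x /mapP [a aF ->] ->]]].
  split; last exact: mem_targets.
  apply/existsP; exists (a, i); rewrite inE /=; move: aF; rewrite mem_enum => ->.
  exact: eqxx.
by rewrite supply capacity; have := T_triples Fl; lra.
Qed.

(* A feasible flow divided by the weights gives the stage on s. *)
Lemma finite_compression : exists psi : X -> 'I_(size T) -> R,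
  [/\ forall x i, 0 <= psi x i <= 1,
      forall x, x \in s -> \sum_i psi x i = 1 &
      forall y, \sum_(i < size T) psi (act (inv (nth one T i)) y) i * w (act (inv (nth one T i)) y)
                <= w y / 3].
Proof.
have supply_ge0 (a : point) : 0 <= w (val a) by exact: ltW.
have cap_ge0 y : 0 <= w y / 3 by rewrite divr_ge0 ?ltW.
have [f [f_ge0 _ f_out f_in]] := fractional_hall supply_ge0 cap_ge0 hall_for_translates.
pose flow x i := if @insub X (fun x => x \in s) point x is Some a then f a i else 0.
have flow_bounds x i : 0 <= flow x i <= w x.
  rewrite /flow; case: insubP => [a _ <-|_]; last by rewrite lexx (ltW (w_gt0 x)).
  rewrite f_ge0 -f_out (bigD1 i) //= lerDl sumr_ge0 //.
have wx_neq0 x : w x != 0 by rewrite gt_eqF.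
exists (fun x i => flow x i / w x); split.
- move=> x i; have /andP [flow_ge0 flow_le] := flow_bounds x i.
  by rewrite divr_ge0 ?(ltW (w_gt0 x)) //= ler_pdivrMr // mul1r.
- by move=> x xs; rewrite -mulr_suml /flow insubT /= f_out /= mulfV.
move=> y; under eq_bigr do rewrite divfK //.
apply: le_trans (f_in y); rewrite /inflow.
under [leRHS]eq_bigr do rewrite big_mkcond.
rewrite exchange_big /=; apply: ler_sum => i _.
rewrite /flow; case: insubP => [a _ ea|_]; last by apply: sumr_ge0 => a _; case: ifP.
rewrite (bigD1 a) //= /port_target ea act_inv eqxx lerDl.
by apply: sumr_ge0 => b _; case: ifP.
Qed.

End FiniteStage.

Lemma le_of_approx (F : realFieldType) (m : nat) (k u : 'I_m -> F) (b : F) :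
  (forall i, 0 <= k i) ->
  (forall e, 0 < e -> exists v : 'I_m -> F,
     (forall i, `|v i - u i| < e) /\ \sum_i k i * v i <= b) ->
  \sum_i k i * u i <= b.
Proof.
move=> k_ge0 approx; rewrite leNgt; apply/negP => b_lt.
pose K := \sum_i k i + 1; pose d := \sum_i k i * u i - b.
have K_gt0 : 0 < K.
  have : 0 <= \sum_i k i by apply: sumr_ge0 => i _; apply: k_ge0.
  rewrite /K; lra.
have d_gt0 : 0 < d by rewrite /d; lra.
have [v [v_close v_le]] := approx (d / K) (divr_gt0 d_gt0 K_gt0).
have gap : \sum_i k i * u i - \sum_i k i * v i <= d / K * \sum_i k i.
  rewrite -sumrB mulr_sumr; apply: ler_sum => i _; rewrite -mulrBr mulrC ler_wpM2r //.
  by apply: le_trans (ltW (v_close i)); rewrite distrC ler_norm.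
have : d / K * \sum_i k i < d.
  by rewrite -[ltRHS](divfK (lt0r_neq0 K_gt0)) ltr_pM2l ?divr_gt0 // /K ltrDl.
by move: gap; rewrite /d; lra.
Qed.

Definition first_points {X : countType} (n : nat) : seq X := pmap pickle_inv (iota 0 n).

Lemma mem_first_points (X : countType) (x : X) n : (pickle x < n)%N -> x \in first_points n.
Proof.
by move=> lt_xn; rewrite mem_pmap; apply/mapP; exists (pickle x); rewrite ?pickleK_inv ?mem_iota.
Qed.

Section LimitOfStages.
Variables (G : Type) (one : G) (inv : G -> G) (X : countType) (act : G -> X -> X)
  (w : X -> R) (T : list G).
Hypothesis w_gt0 : forall x, 0 < w x.
Variables (psi : nat -> X -> 'I_(size T) -> R) (p : X * 'I_(size T) -> R).
Hypothesis stage_sum1 : forall n x, x \in first_points n -> \sum_i psi n x i = 1.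
Hypothesis stage_compress : forall n y,
  \sum_(i < size T) psi n (act (inv (nth one T i)) y) i * w (act (inv (nth one T i)) y)
  <= w y / 3.
Hypothesis cluster : forall (cs : seq (X * 'I_(size T))) (e : R), 0 < e -> forall N,
  exists n, (N <= n)%N /\ forall c, c \in cs -> `|psi n c.1 c.2 - p c| < e.

(* Normalization passes to the limit: the stages are normalized at x eventually. *)
Lemma limit_sum1 x : \sum_i p (x, i) = 1.
Proof.
have close e : 0 < e -> exists n, (forall i, `|psi n x i - p (x, i)| < e) /\ \sum_i psi n x i = 1.
  move=> e_gt0; have [n [le_n close]] :=
    cluster [seq (x, i) | i <- enum 'I_(size T)] e_gt0 (pickle x).+1.
  exists n; split; first by move=> i; apply: (close (x, i)); rewrite map_f ?mem_enum.
  by apply: stage_sum1; apply: mem_first_points.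
have le1 : \sum_i 1 * p (x, i) <= 1.
  apply: le_of_approx => // e /close [n [close_n sum1]]; exists (psi n x); split => //.
  by under eq_bigr do rewrite mul1r; rewrite sum1.
have ge1 : \sum_i 1 * - p (x, i) <= -1.
  apply: le_of_approx => // e /close [n [close_n sum1]]; exists (fun i => - psi n x i).
  split; first by move=> i; rewrite -opprD normrN.
  suff -> : \sum_i 1 * - psi n x i = - \sum_i psi n x i by rewrite sum1.
  by rewrite -sumrN; apply: eq_bigr => i _; rewrite mul1r.
have e1 : \sum_i 1 * p (x, i) = \sum_i p (x, i) by apply: eq_bigr => i _; rewrite mul1r.
have e2 : \sum_i 1 * - p (x, i) = - \sum_i p (x, i).
  by rewrite -sumrN; apply: eq_bigr => i _; rewrite mul1r.
by apply/eqP; rewrite eq_le -{1}e1 le1 -lerN2 -e2 ge1.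
Qed.

Lemma limit_compression y :
  \sum_(i < size T) p (act (inv (nth one T i)) y, i) * w (act (inv (nth one T i)) y)
  <= w y / 3.
Proof.
pose z (i : 'I_(size T)) := act (inv (nth one T i)) y.
under eq_bigr do rewrite mulrC.
apply: le_of_approx => [i|e e_gt0]; first exact: ltW.
have [n [_ close]] := cluster [seq (z i, i) | i <- enum 'I_(size T)] e_gt0 0.
exists (fun i => psi n (z i) i); split.
  by move=> i; apply: (close (z i, i)); rewrite map_f ?mem_enum.
by under eq_bigr do rewrite mulrC; apply: stage_compress.
Qed.

End LimitOfStages.

Lemma compression_weights (G : Type) (one : G) (inv : G -> G) (X : countType)
    (act : G -> X -> X) (w : X -> R) (T : list G) :
  (forall g x, act g (act (inv g) x) = x) -> (forall x, 0 < w x) ->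
  (forall F : seq X, 3 * wsum w F <= wsum w (translates act T F)) ->
  exists p : X * 'I_(size T) -> R, [/\ forall c, 0 <= p c <= 1,
    forall x, \sum_i p (x, i) = 1 &
    forall y, \sum_(i < size T) p (act (inv (nth one T i)) y, i) * w (act (inv (nth one T i)) y)
              <= w y / 3].
Proof.
move=> act_inv w_gt0 T_triples.
have [psi psi_ok] :=
  choice (fun n => finite_compression one act_inv w_gt0 T_triples (first_points n)).
have psi01 n (c : X * 'I_(size T)) : 0 <= psi n c.1 c.2 <= 1 by case: (psi_ok n).
have stage_sum1 n x : x \in first_points n -> \sum_i psi n x i = 1.
  by case: (psi_ok n) => _ sum1 _; apply: sum1.
have stage_compress n y : \sum_(i < size T)
    psi n (act (inv (nth one T i)) y) i * w (act (inv (nth one T i)) y) <= w y / 3.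
  by case: (psi_ok n) => _ _; apply.
have [p [p01 cluster]] := pointwise_cluster_point psi01.
exists p; split => // [x|y]; first exact: limit_sum1 stage_sum1 cluster x.
exact: (@limit_compression G one inv X act w T w_gt0 psi p stage_compress cluster y).
Qed.

Lemma gsum_nth (G : Type) (one : G) (T : list G) (f : G -> R) :
  gsum T f = \sum_(i < size T) f (nth one T i).
Proof.
rewrite -(big_mkord xpredT (fun i => f (nth one T i))) -(big_nth one xpredT f) /gsum.
by elim: T => [|a l IH] /=; rewrite ?big_nil ?big_cons ?IH.
Qed.

Lemma nth_NoDup_inj (G : Type) (one : G) (T : list G) i j :
  List.NoDup T -> (i < size T)%N -> (j < size T)%N -> nth one T i = nth one T j -> i = j.
Proof.
have nth_In k (l : list G) : (k < size l)%N -> List.In (nth one l k) l.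
  by move=> lt_k; apply/(In_nth_ord one); exists (Ordinal lt_k).
elim: T i j => [|a l IH] [|i] [|j] //= /List.NoDup_cons_iff [aNl l_nodup] lt_i lt_j eq_ij.
- by case: aNl; rewrite eq_ij; apply: nth_In.
- by case: aNl; rewrite -eq_ij; apply: nth_In.
- by congr S; apply: IH.
Qed.

Definition weight_of_element (G : Type) (X : Type) (one : G) (T : list G)
    (p : X * 'I_(size T) -> R) (g : G) (x : X) : R :=
  if pselect (exists i : 'I_(size T), nth one T i = g) is left h
  then p (x, projT1 (cid h)) else 0.

Lemma weight_of_nth (G : Type) (X : Type) (one : G) (T : list G) (p : X * 'I_(size T) -> R)
    (i : 'I_(size T)) x :
  List.NoDup T -> weight_of_element one p (nth one T i) x = p (x, i).
Proof.
move=> T_nodup; rewrite /weight_of_element; case: pselect => [h|[]]; last by exists i.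
case: (cid h) => j /= eq_ji; congr (p (x, _)); apply: val_inj.
exact: nth_NoDup_inj T_nodup (ltn_ord j) (ltn_ord i) eq_ji.
Qed.

Lemma compression_system_of_weights (G : Type) (one : G) (inv : G -> G) (X : countType)
    (act : G -> X -> X) (w : X -> R) (T : list G) (p : X * 'I_(size T) -> R) :
  List.NoDup T -> (forall c, 0 <= p c <= 1) -> (forall x, \sum_i p (x, i) = 1) ->
  (forall y, \sum_(i < size T) p (act (inv (nth one T i)) y, i) * w (act (inv (nth one T i)) y)
             <= w y / 3) ->
  (forall x, 0 < w x) ->
  w_compression_system inv act w T (weight_of_element one p).
Proof.
move=> T_nodup p01 p_sum1 p_compress w_gt0.
have Psi01 g x : 0 <= weight_of_element one p g x <= 1.
  by rewrite /weight_of_element; case: pselect => [h|_]; rewrite ?p01 ?lexx ?ler01.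
split => //; split.
  move=> g _; split => [x|]; first by apply/RleP; case/andP: (Psi01 g x).
  by exists 1 => x; apply/RleP; case/andP: (Psi01 g x).
move=> x; rewrite !(gsum_nth one); split.
  rewrite R1E -(p_sum1 x).
  by apply: eq_bigr => i _; rewrite weight_of_nth.
have two : IZR 2 = 2%:R by rewrite -INRE INR_IZR_INZ.
apply/RltP; rewrite RinvE two.
apply: le_lt_trans (_ : w x / 3 / w x < 2%:R^-1); last first.
  by rewrite mulrAC divff ?gt_eqF // mul1r; lra.
rewrite ler_pdivlMr // mulr_suml; apply: le_trans (p_compress x).
rewrite le_eqVlt; apply/orP; left; apply/eqP; apply: eq_bigr => i _.
by rewrite weight_of_nth // RmultE RdivE mulrA divfK ?gt_eqF.
Qed.

Lemma act_inv_cancel (G X : Type) (mul : G -> G -> G) (inv : G -> G) (one : G)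
    (act : G -> X -> X) :
  is_group mul inv one -> is_action mul one act -> forall g x, act g (act (inv g) x) = x.
Proof.
move=> [_ [_ [_ [_ mulV]]]] [act1 actM] g x.
by rewrite -actM mulV act1.
Qed.

(* The statement below writes Stdlib real inequalities as (_)%R. *)
Delimit Scope R_scope with R.

Theorem proposition2p3 (G : Type) (mul : G -> G -> G) (inv : G -> G) (one : G)
  (X : countType) (act : G -> X -> X) (S : list G) (w : X -> R) :
  is_group mul inv one ->
  is_action mul one act ->
  symmetric_generating mul inv one S ->
  (forall x, (0 < w x)%R) ->
  balanced act S w ->
  ~ (exists F : nat -> list X, w_Folner_sequence act w F) ->
  exists (T : list G) (Psi : G -> X -> R), w_compression_system inv act w T Psi.
Proof.
move=> group action S_gen w_pos _ no_folner.
have w_gt0 x : 0 < w x by have /RltP := w_pos x.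
have [T [T_nodup T_triples]] := tripling_set action S_gen w_gt0 no_folner.
have act_inv := act_inv_cancel group action.
have [p [p01 p_sum1 p_compress]] := compression_weights one act_inv w_gt0 T_triples.
exists T, (weight_of_element one p).
exact: compression_system_of_weights T_nodup p01 p_sum1 p_compress w_gt0.
Qed.
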